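(* Every cubic space $(W,g)$ of dimension at most $\aleph_0$ embeds into the cubic space $V(\infty)$.
   Context: $k$ is algebraically closed of characteristic different from $2,3$. For a vector space with a basis, the dual functionals are called coordinates; $P_n(V)$ is the space of formal, possibly infinite, $k$-linear combinations of degree-$n$ monomials in the coordinates. A cubic space is $(V,f)$ with $f\in P_3(V)$; an embedding $(W,g)\to(V,f)$ is a $k$-linear map $\phi:W\to V$ with $f\circ\phi=g$. The cubic space $V(\infty)$ has coordinates $\{x_i\}_{i\ge1}\cup\{y_{i,j}\}_{i,j\ge1}$ and form $f_\infty=3\sum_{i\ge1}x_iq_i$ with $q_i=\sum_{j\ge1}y_{i,j}^2$. *)

From mathcomp Require Import all_boot all_order all_algebra.
Set Implicit Arguments. Unset Strict Implicit. Unset Printing Implicit Defensive.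
Import GRing.Theory.
Local Open Scope ring_scope.

(* A vector space with a countable basis indexed by J : countType is modelled
   as the finitely supported functions J -> k (the coordinate vectors). *)
Definition covers (J : eqType) (k : nzRingType) (s : seq J) (v : J -> k) :=
  forall j, v j != 0 -> j \in s.

Definition fsupp (J : eqType) (k : nzRingType) (v : J -> k) :=
  exists s : seq J, covers s v.

(* A k-linear map between such spaces: only its values on finitely supported
   vectors matter. *)
Definition fs_linear (J I : eqType) (k : nzRingType) (phi : (J -> k) -> (I -> k)) :=
  (forall v, fsupp v -> fsupp (phi v)) /\
  (forall (a : k) (v w : J -> k), fsupp v -> fsupp w ->
     forall i, phi (fun j => a * v j + w j) i = a * phi v i + phi w i).

(* An element of P_3 (a formal, possibly infinite, linear combination of
   degree-3 monomials in the coordinates) is given by its coefficient function: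
   f a b c is the coefficient of the monomial x_a x_b x_c, read only on
   triples sorted by the injective enumeration pickle
   (pickle a <= pickle b <= pickle c), so that each monomial corresponds to
   exactly one sorted triple. *)
Definition cubic (J : countType) (k : nzRingType) := J -> J -> J -> k.

Definition sorted3 (J : countType) (a b c : J) :=
  (pickle a <= pickle b)%N && (pickle b <= pickle c)%N.

(* Value of the cubic form f at the finitely supported vector v, computed as a
   finite sum over a sequence s covering the support of v (the result does
   not depend on such s). *)
Definition cubic_eval (J : countType) (k : nzRingType) (f : cubic J k)
    (s : seq J) (v : J -> k) : k :=
  \sum_(a <- undup s) \sum_(b <- undup s) \sum_(c <- undup s | sorted3 a b c)
     f a b c * v a * v b * v c.

(* The cubic space V(infinity): coordinates x_i (i >= 1), encoded as inl (i-1),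
   and y_{i,j} (i,j >= 1), encoded as inr (i-1, j-1). *)
Definition Vinf_idx : countType := (nat + (nat * nat))%type.

Definition mon_xyy (x y z : Vinf_idx) : bool :=
  match x, y with
  | inl i, inr (i', _) => (i == i')%N && (y == z)
  | _, _ => false
  end.

(* f_infinity = 3 * sum_i x_i * sum_j y_{i,j}^2 : coefficient 3 on each monomial
   x_i y_{i,j}^2 and 0 on all others (symmetric in the three arguments). *)
Definition f_inf (k : nzRingType) : cubic Vinf_idx k :=
  fun a b c => if [|| mon_xyy a b c, mon_xyy b a c | mon_xyy c a b]
               then 3%:R else 0.

Definition cubic_embedding (J I : countType) (k : nzRingType)
    (g : cubic J k) (f : cubic I k) (phi : (J -> k) -> (I -> k)) :=
  fs_linear phi /\
  forall w : J -> k, forall s : seq J, covers s w ->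
    forall s' : seq I, covers s' (phi w) ->
      cubic_eval f s' (phi w) = cubic_eval g s w.

From mathcomp Require Import all_boot all_order all_algebra.
From mathcomp Require Import ring.
From Stdlib Require Import ClassicalEpsilon FunctionalExtensionality.
Set Implicit Arguments. Unset Strict Implicit. Unset Printing Implicit Defensive.
Import GRing.Theory.
Local Open Scope ring_scope.

(* Enumerate the coordinates of W through [pickle] as u_0, u_1, ...  Then
   g(u) = sum_(i <= m <= n) G_imn u_i u_m u_n = sum_(i <= m) u_i u_m L_im(u), where
   L_im(u) = sum_(n >= m) G_imn u_n is a linear form.  As 2 and 3 are invertible and
   -1 = im^2, each term has the shape 3 x (y^2 + z^2):
     u_i u_m L = 3 (u_i/3) (((u_m + L)/2)^2 + (im (u_m - L)/2)^2).
   So x_i := u_i/3 and y_{i,2m}, y_{i,2m+1} := the two squared forms (m >= i) pull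
   f_infinity back to g.  On a vector supported below B, L_im vanishes for m >= B,
   hence so do all but finitely many of these coordinates. *)

Section Sums.
Variable R : nmodType.

Lemma big_undup_cover (T : eqType) (h : T -> R) (s t : seq T) :
  (forall x, x \notin s -> h x = 0) -> (forall x, x \notin t -> h x = 0) ->
  \sum_(x <- undup s) h x = \sum_(x <- undup t) h x.
Proof.
move=> hs ht.
have restrict (r u : seq T) : (forall x, x \notin u -> h x = 0) ->
    \sum_(x <- undup r) h x = \sum_(x <- undup r | x \in u) h x.
  move=> hu; rewrite [RHS]big_mkcond /=; apply: eq_bigr => x _.
  by case: ifP => // /negbT /hu ->.
rewrite (restrict s t ht) (restrict t s hs) -[LHS]big_filter -[RHS]big_filter.
apply/perm_big/uniq_perm => [||x]; try exact/filter_uniq/undup_uniq.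
by rewrite !mem_filter !mem_undup andbC.
Qed.

Lemma big_uniq_support1 (T : eqType) (r : seq T) (b : T) (F : T -> R) :
  uniq r -> b \in r -> (forall c, c != b -> F c = 0) -> \sum_(c <- r) F c = F b.
Proof. by move=> ur br hF; rewrite (bigD1_seq b br ur) /= big1 ?addr0. Qed.

Definition vanishes_from (u : nat -> R) B := forall n, (B <= n)%N -> u n = 0.

Lemma vanishes_from_le (u : nat -> R) B B' :
  (B <= B')%N -> vanishes_from u B -> vanishes_from u B'.
Proof. by move=> le hB n hn; apply/hB/(leq_trans le). Qed.

Lemma big_nat_trunc (h : nat -> R) M N : (M <= N)%N ->
  vanishes_from h M -> \sum_(0 <= n < N) h n = \sum_(0 <= n < M) h n.
Proof.
move=> MN hM; rewrite (big_cat_nat (leq0n M) MN) /=.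
rewrite [X in _ + X]big1_seq ?addr0 // => n /andP[_].
by rewrite mem_index_iota => /andP[/hM].
Qed.

Lemma big_nat_double (h : nat -> R) B :
  \sum_(0 <= j < B.*2) h j = \sum_(0 <= m < B) (h m.*2 + h m.*2.+1).
Proof.
elim: B => [|B IH]; first by rewrite !big_geq.
by rewrite doubleS !big_nat_recr //= IH addrA.
Qed.

End Sums.

Section FinitePairing.
Variable k : comNzRingType.
Implicit Types (u c : nat -> k) (B : nat).

Definition support_bound u : nat := epsilon (inhabits 0%N) (vanishes_from u).

Lemma support_boundP u B : vanishes_from u B -> vanishes_from u (support_bound u).
Proof. by move=> hB; apply: epsilon_spec; exists B. Qed.

(* Meaningful only for finitely supported [u]; the bound is chosen classically,
   as finite support is undecidable. *)
Definition pairing c u : k := \sum_(0 <= n < support_bound u) c n * u n.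

Lemma pairingE c u B : vanishes_from u B -> pairing c u = \sum_(0 <= n < B) c n * u n.
Proof.
move=> hB; have hS := support_boundP hB.
have hmin : vanishes_from u (minn B (support_bound u)).
  by move=> n; rewrite geq_min => /orP[/hB|/hS].
have trunc B' : (minn B (support_bound u) <= B')%N ->
    \sum_(0 <= n < B') c n * u n = \sum_(0 <= n < minn B (support_bound u)) c n * u n.
  by move=> le; apply: (@big_nat_trunc _ (fun n => c n * u n)) => // n /hmin ->; rewrite mulr0.
by rewrite /pairing (trunc B) ?geq_minl // trunc ?geq_minr.
Qed.

Lemma pairing_lin c a u1 u2 B1 B2 :
  vanishes_from u1 B1 -> vanishes_from u2 B2 ->
  pairing c (fun n => a * u1 n + u2 n) = a * pairing c u1 + pairing c u2.
Proof.
move=> h1 h2; have h1' := vanishes_from_le (leq_maxl B1 B2) h1.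
have h2' := vanishes_from_le (leq_maxr B1 B2) h2.
have h : vanishes_from (fun n => a * u1 n + u2 n) (maxn B1 B2).
  by move=> n hn; rewrite h1' ?h2' // mulr0 addr0.
rewrite !(pairingE _ h) (pairingE _ h1') (pairingE _ h2') mulr_sumr -big_split /=.
by apply: eq_bigr => n _; ring.
Qed.

End FinitePairing.

Section PickleReindexing.
Variables (R : nmodType) (T : countType).

Definition pickle_lift (h : T -> R) (n : nat) : R := oapp h 0 (pickle_inv n).

Definition pickle_lift3 (F : T -> T -> T -> R) (n1 n2 n3 : nat) : R :=
  match pickle_inv n1, pickle_inv n2, pickle_inv n3 with
  | Some a, Some b, Some c => F a b c
  | _, _, _ => 0
  end.

Definition pickle_bound (s : seq T) : nat := \max_(a <- s) (pickle a).+1.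

Lemma pickle_inj : injective (@pickle T).
Proof. exact: pcan_inj (@pickleK_inv T). Qed.

Lemma pickle_bound_gt (s : seq T) a : a \in s -> (pickle a < pickle_bound s)%N.
Proof.
by move=> sa; rewrite /pickle_bound (leq_bigmax_seq (F := fun a : T => (pickle a).+1) a).
Qed.

Lemma pickle_lift_vanish (h : T -> R) s :
  (forall x, x \notin s -> h x = 0) -> vanishes_from (pickle_lift h) (pickle_bound s).
Proof.
move=> hs n hn; rewrite /pickle_lift; case: pickle_inv (@pickle_invK T n) => //= a ea.
by apply: hs; apply: contraTN hn => /pickle_bound_gt; rewrite ea -ltnNge.
Qed.

Lemma big_undup_pickle (h : T -> R) (s : seq T) : (forall x, x \notin s -> h x = 0) ->
  \sum_(x <- undup s) h x = \sum_(0 <= n < pickle_bound s) pickle_lift h n.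
Proof.
move=> hs; have -> : index_iota 0 (pickle_bound s) = undup (iota 0 (pickle_bound s)).
  by rewrite undup_id ?iota_uniq // /index_iota subn0.
rewrite [RHS](@big_undup_cover _ _ _ _ (map pickle (undup s))); first last.
- move=> n; rewrite /pickle_lift; case: pickle_inv (@pickle_invK T n) => //= a <-.
  by rewrite (mem_map pickle_inj) mem_undup => /hs.
- move=> n; rewrite /pickle_lift; case: pickle_inv (@pickle_invK T n) => //= a <-.
  by rewrite mem_iota /= add0n => hout; apply/hs/(contra _ hout)/pickle_bound_gt.
rewrite [in RHS]undup_id ?(map_inj_uniq pickle_inj) ?undup_uniq // big_map.
by apply: eq_bigr => a _; rewrite /pickle_lift pickleK_inv.
Qed.

Lemma big_undup_pickle3 (F : T -> T -> T -> R) (s : seq T) :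
  (forall a b c, F a b c != 0 -> [&& a \in s, b \in s & c \in s]) ->
  \sum_(a <- undup s) \sum_(b <- undup s) \sum_(c <- undup s) F a b c =
  \sum_(0 <= n1 < pickle_bound s) \sum_(0 <= n2 < pickle_bound s)
    \sum_(0 <= n3 < pickle_bound s) pickle_lift3 F n1 n2 n3.
Proof.
move=> hF.
have out a b c : [|| a \notin s, b \notin s | c \notin s] -> F a b c = 0.
  by move=> hout; apply/eqP; apply: contraTT hout => /hF /and3P[-> -> ->].
rewrite big_undup_pickle => [|a sa]; last by do 2!(apply: big1 => ? _); rewrite out ?sa.
apply: eq_bigr => n1 _; rewrite /pickle_lift /pickle_lift3.
case: (pickle_inv n1) => [a|] /=; last by rewrite !big1_eq.
rewrite big_undup_pickle => [|b sb]; last by apply: big1 => ? _; rewrite out ?sb ?orbT.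
apply: eq_bigr => n2 _; rewrite /pickle_lift.
case: (pickle_inv n2) => [b|] /=; last by rewrite big1_eq.
rewrite big_undup_pickle => [|c sc]; last by rewrite out ?sc ?orbT.
by apply: eq_bigr => n3 _; rewrite /pickle_lift; case: (pickle_inv n3).
Qed.

End PickleReindexing.

Lemma covers_vanish (k : nzRingType) (J : eqType) (s : seq J) (w : J -> k) :
  covers s w -> forall x, x \notin s -> w x = 0.
Proof. by move=> hw x xs; apply/eqP; apply: contraNT xs; apply: hw. Qed.

Lemma pickle_lift_covers (k : nzRingType) (J : countType) (s : seq J) (w : J -> k) :
  covers s w -> vanishes_from (pickle_lift w) (pickle_bound s).
Proof. by move/covers_vanish; apply: pickle_lift_vanish. Qed.

Definition sorted_cubic_sum (k : nzRingType) (G : nat -> nat -> nat -> k) (u : nat -> k)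
    (B : nat) : k :=
  \sum_(0 <= i < B) \sum_(0 <= m < B) \sum_(0 <= n < B)
    (if (i <= m <= n)%N then G i m n * u i * u m * u n else 0).

Lemma cubic_eval_pickle (k : comNzRingType) (J : countType) (g : cubic J k) s w :
  covers s w ->
  cubic_eval g s w = sorted_cubic_sum (pickle_lift3 g) (pickle_lift w) (pickle_bound s).
Proof.
move=> hw; rewrite /cubic_eval.
under eq_bigr do under eq_bigr do rewrite big_mkcond /=.
rewrite big_undup_pickle3 => [|a b c]; last first.
  case: ifP => _ hne; last by rewrite eqxx in hne.
  by apply/and3P; split; apply: hw; apply: contraNneq hne => ->; rewrite ?mulr0 ?mul0r.
rewrite /sorted_cubic_sum; apply: eq_bigr => n1 _; apply: eq_bigr => n2 _.
apply: eq_bigr => n3 _; rewrite /pickle_lift3 /pickle_lift /=.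
case: pickle_inv (@pickle_invK J n1) => [a /= <-|_]; last by case: ifP; rewrite ?mul0r.
case: pickle_inv (@pickle_invK J n2) => [b /= <-|_]; last by case: ifP; rewrite ?mulr0 ?mul0r.
by case: pickle_inv (@pickle_invK J n3) => [c /= <-|_]; last by case: ifP; rewrite ?mulr0 ?mul0r.
Qed.

Section CubicFormVinf.
Variable k : comNzRingType.
Implicit Types (v : Vinf_idx -> k) (s : seq Vinf_idx).

Definition xyy_term v (p q : Vinf_idx) : k :=
  match p, q with
  | inl i, inr (i', _) => if i == i' then 3%:R * v p * v q * v q else 0
  | _, _ => 0
  end.

Lemma xyy_term_vanish v p q : v p = 0 \/ v q = 0 -> xyy_term v p q = 0.
Proof.
by case: p q => [i|[i j]] [i'|[i' j']] //= [] ->; case: ifP; rewrite ?mulr0 ?mul0r.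
Qed.

Lemma mon_xyy_inl x i z : mon_xyy x (inl i) z = false.
Proof. by case: x. Qed.

Lemma f_inf_inl i b c : f_inf k (inl i) b c = if mon_xyy (inl i) b c then 3%:R else 0.
Proof. by rewrite /f_inf !mon_xyy_inl !orbF. Qed.

(* Each monomial x_i y_ij^2 occurs once among the pickle-sorted triples: as
   (x_i, y_ij, y_ij) or as (y_ij, y_ij, x_i), according to the order of pickles. *)
Lemma f_inf_x_row v s i b : b \in undup s ->
  \sum_(c <- undup s)
     (if sorted3 (inl i) b c then f_inf k (inl i) b c * v (inl i) * v b * v c else 0)
  = if (pickle (inl i : Vinf_idx) <= pickle b)%N then xyy_term v (inl i) b else 0.
Proof.
move=> sb; under eq_bigr do rewrite f_inf_inl.
case: b sb => [i'|[i' j']] sb /=.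
  by rewrite big1 => [|c _]; case: ifP; rewrite ?mul0r.
rewrite (big_uniq_support1 (undup_uniq s) sb) => [|c]; last first.
  by rewrite eq_sym => /negbTE ->; rewrite andbF; case: ifP; rewrite ?mul0r.
by rewrite /sorted3 leqnn andbT eqxx andbT; case: ifP => // _; case: ifP; rewrite ?mul0r.
Qed.

Lemma mon_xyy_eq x y z : mon_xyy x y z -> y = z.
Proof. by case: x y => [i|?] [|[i' j']] //= /andP[_ /eqP]. Qed.

Lemma f_inf_y_row v s p : inr p \in undup s ->
  \sum_(b <- undup s) \sum_(c <- undup s)
     (if sorted3 (inr p) b c then f_inf k (inr p) b c * v (inr p) * v b * v c else 0)
  = \sum_(c <- undup s)
      (if (pickle (inr p : Vinf_idx) <= pickle c)%N then xyy_term v c (inr p) else 0).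
Proof.
move=> sp; rewrite (big_uniq_support1 (undup_uniq s) sp) => [|b ba]; last first.
  apply: big1 => c _; case: ifP => // /andP[pb bc].
  rewrite /f_inf /=.
  suff -> : mon_xyy b (inr p) c || mon_xyy c (inr p) b = false by rewrite !mul0r.
  apply/norP; split; apply/negP => /mon_xyy_eq pe; last by rewrite pe eqxx in ba.
  move: bc; rewrite -pe => bp; move/negP: ba; apply.
  by apply/eqP/pickle_inj/eqP; rewrite eqn_leq bp pb.
apply: eq_bigr => c _; rewrite /sorted3 leqnn /=; case: ifP => // _.
case: p {sp} => i j; rewrite /f_inf /=; case: c => [i'|[i' j']] /=; last by rewrite !mul0r.
by rewrite eqxx andbT eq_sym; case: eqP => _; rewrite ?mul0r //; ring.
Qed.

Lemma xyy_term_diag v p : xyy_term v p p = 0.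
Proof. by case: p => [|[]]. Qed.

Lemma cubic_eval_f_inf_terms s v :
  cubic_eval (f_inf k) s v = \sum_(p <- undup s) \sum_(q <- undup s) xyy_term v p q.
Proof.
rewrite /cubic_eval; under eq_bigr do under eq_bigr do rewrite big_mkcond /=.
pose le (p q : Vinf_idx) (x : k) := if (pickle p <= pickle q)%N then x else 0.
transitivity (\sum_(p <- undup s) \sum_(q <- undup s)
                (le p q (xyy_term v p q) + le p q (xyy_term v q p))).
  apply: eq_big_seq => -[i|p] sa.
    apply: eq_big_seq => b sb; rewrite (f_inf_x_row _ _ sb) /le.
    have -> : xyy_term v b (inl i) = 0 by case: b {sb} => [|[]].
    by rewrite if_same addr0.
  by rewrite (f_inf_y_row _ sa); apply: eq_bigr => c _; rewrite /le if_same add0r.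
under eq_bigr do rewrite big_split /=.
rewrite big_split /= [X in _ + X]exchange_big /= -big_split /=.
apply: eq_bigr => p _; rewrite -big_split /=; apply: eq_bigr => q _; rewrite /le.
case: (ltngtP (pickle p) (pickle q)) => [_|_|/pickle_inj ->]; rewrite ?addr0 ?add0r //.
by rewrite xyy_term_diag addr0.
Qed.

Definition xy_box (B C : nat) : seq Vinf_idx :=
  [seq inl i | i <- iota 0 B] ++ [seq inr (i, j) | i <- iota 0 B, j <- iota 0 C].

Lemma xy_box_uniq B C : uniq (xy_box B C).
Proof.
rewrite cat_uniq; apply/and3P; split.
- by rewrite map_inj_uniq ?iota_uniq // => x y [].
- by apply/hasPn => x /allpairsP [[i j] [_ _ ->]]; apply/mapP => -[].
- by apply: allpairs_uniq; rewrite ?iota_uniq // => -[? ?] [? ?] _ _ [-> ->].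
Qed.

Lemma mem_xy_box_inl B C i : (inl i \in xy_box B C) = (i < B)%N.
Proof.
rewrite mem_cat (mem_map (@inl_inj _ _)) mem_iota add0n.
by rewrite (negbTE (_ : inl i \notin _)) ?orbF //; apply/allpairsP => -[[? ?] []].
Qed.

Lemma mem_xy_box_inr B C i j : (inr (i, j) \in xy_box B C) = (i < B)%N && (j < C)%N.
Proof.
rewrite mem_cat (negbTE (_ : inr (i, j) \notin _)); last by apply/mapP => -[].
apply/allpairsP/andP => [[[i' j'] [] /=]|[hi hj]].
  by rewrite !mem_iota => hi hj [-> ->].
by exists (i, j); rewrite !mem_iota.
Qed.

Lemma cubic_eval_f_inf s v B C :
  covers s v -> (forall x, x \notin xy_box B C -> v x = 0) ->
  cubic_eval (f_inf k) s v =
    \sum_(0 <= i < B) \sum_(0 <= j < C) 3%:R * v (inl i) * v (inr (i, j)) ^+ 2.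
Proof.
move=> /covers_vanish out_s hbox; rewrite cubic_eval_f_inf_terms.
have to_box p : \sum_(q <- undup s) xyy_term v p q =
                 \sum_(q <- undup (xy_box B C)) xyy_term v p q.
  by apply: big_undup_cover => q qn; apply: xyy_term_vanish; right; [apply: out_s|apply: hbox].
under eq_bigr do rewrite to_box.
rewrite (@big_undup_cover _ _ _ _ (xy_box B C)) => [|p /out_s vp|p /hbox vp]; first last.
- by apply: big1 => q _; apply: xyy_term_vanish; left.
- by apply: big1 => q _; apply: xyy_term_vanish; left.
have iotaE n : iota 0 n = index_iota 0 n by rewrite /index_iota subn0.
rewrite !undup_id ?xy_box_uniq // {1}/xy_box big_cat big_map big_allpairs_dep /=.
rewrite [X in _ + X]big1 ?addr0 => [|i _]; last by apply: big1 => j _; apply: big1.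
rewrite iotaE; apply: eq_big_seq => i; rewrite mem_index_iota => /andP[_ iB].
rewrite /xy_box big_cat big_map big1 // big_allpairs_dep /=.
rewrite (@big_uniq_support1 _ _ _ i) ?iota_uniq ?mem_iota // => [|i' ne]; last first.
  by apply: big1 => j _ /=; rewrite eq_sym (negbTE ne).
by rewrite iotaE add0r; apply: eq_bigr => j _; rewrite eqxx expr2 mulrA.
Qed.

End CubicFormVinf.

Lemma mul_as_xyy (k : fieldType) (im x y z : k) :
  im ^+ 2 = -1 -> 2%:R != 0 :> k -> 3%:R != 0 :> k ->
  3%:R * (x / 3%:R) * ((y + z) / 2%:R) ^+ 2 +
  3%:R * (x / 3%:R) * (im * (y - z) / 2%:R) ^+ 2 = x * y * z.
Proof.
move=> him h2 h3.
have -> : (im * (y - z) / 2%:R) ^+ 2 = - ((y - z) / 2%:R) ^+ 2.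
  by rewrite -mulrA exprMn him mulN1r.
by field; rewrite h2 h3.
Qed.

Section Embedding.
Variables (k : fieldType) (im : k) (G : nat -> nat -> nat -> k).

Definition tail_form i m (u : nat -> k) : k :=
  pairing (fun n => if (m <= n)%N then G i m n else 0) u.

(* Chosen so that 3 x_i (y_{i,2m}^2 + y_{i,2m+1}^2) = u_i u_m L_im(u), by [mul_as_xyy]. *)
Definition embed_Vinf (u : nat -> k) (p : Vinf_idx) : k :=
  match p with
  | inl i => u i / 3%:R
  | inr (i, j) =>
      if (i <= j./2)%N then
        (if odd j then im * (u j./2 - tail_form i j./2 u)
         else u j./2 + tail_form i j./2 u) / 2%:R
      else 0
  end.

Lemma tail_form_vanish u B i m :
  vanishes_from u B -> (B <= m)%N -> tail_form i m u = 0.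
Proof.
move=> hB Bm; rewrite /tail_form (pairingE _ hB) big1 // => n _.
by case: ifP => [mn|]; rewrite ?mul0r // hB ?mulr0 // (leq_trans Bm mn).
Qed.

Lemma embed_Vinf_vanish u B :
  vanishes_from u B -> forall x, x \notin xy_box B B.*2 -> embed_Vinf u x = 0.
Proof.
move=> hB; case => [i|[i j]] /=.
  by rewrite mem_xy_box_inl -leqNgt => /hB ->; rewrite mul0r.
rewrite mem_xy_box_inr negb_and -!leqNgt; case: ifP => // im2 out.
have Bm : (B <= j./2)%N.
  case/orP: out => [Bi|]; first exact: leq_trans Bi im2.
  by rewrite -geq_half_double.
by rewrite hB // (tail_form_vanish i hB Bm) subr0 addr0 mulr0; case: odd; rewrite mul0r.
Qed.

Lemma embed_Vinf_lin a u1 u2 B1 B2 p :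
  vanishes_from u1 B1 -> vanishes_from u2 B2 ->
  embed_Vinf (fun n => a * u1 n + u2 n) p = a * embed_Vinf u1 p + embed_Vinf u2 p.
Proof.
move=> h1 h2; case: p => [i|[i j]] /=; first by rewrite mulrDl mulrA.
case: ifP => _; last by rewrite mulr0 addr0.
by rewrite /tail_form (pairing_lin _ _ h1 h2); case: odd; ring.
Qed.

Lemma cubic_eval_embed_Vinf s u B :
  im ^+ 2 = -1 -> 2%:R != 0 :> k -> 3%:R != 0 :> k ->
  vanishes_from u B -> covers s (embed_Vinf u) ->
  cubic_eval (f_inf k) s (embed_Vinf u) = sorted_cubic_sum G u B.
Proof.
move=> him h2 h3 hB hs.
rewrite (cubic_eval_f_inf hs (embed_Vinf_vanish hB)) /sorted_cubic_sum.
apply: eq_bigr => i _; rewrite big_nat_double; apply: eq_bigr => m _ /=.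
rewrite doubleK uphalf_double odd_double /=.
case: (leqP i m) => im_le; last first.
  by rewrite expr0n mulr0 addr0 big1_eq.
rewrite mul_as_xyy // /tail_form (pairingE _ hB) !mulr_sumr.
by apply: eq_bigr => n _; case: ifP => _ /=; rewrite ?mulr0 ?mul0r //; ring.
Qed.

End Embedding.

Lemma closed_sqrt_neg1 (k : closedFieldType) : exists im : k, im ^+ 2 = -1.
Proof.
have [x hx] := @solve_monicpoly k 2 (fun i => if i == 0%N then -1 else 0) isT.
by exists x; rewrite hx !big_ord_recr big_ord0 /= add0r mul0r addr0 expr0 mulr1.
Qed.

Theorem lemma4p3 (k : closedFieldType)
    (hk2 : (2 \notin [pchar k])%N) (hk3 : (3 \notin [pchar k])%N)
    (J : countType) (g : cubic J k) :
  exists phi : (J -> k) -> (Vinf_idx -> k),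
    cubic_embedding g (f_inf k) phi.
Proof.
have h2 : 2%:R != 0 :> k by move: hk2; rewrite !inE.
have h3 : 3%:R != 0 :> k by move: hk3; rewrite !inE.
have [im him] := closed_sqrt_neg1 k.
pose G := pickle_lift3 g.
exists (fun w => embed_Vinf im G (pickle_lift w)).
split; first split.
- move=> w [s /pickle_lift_covers hB]; exists (xy_box (pickle_bound s) (pickle_bound s).*2).
  by move=> x; apply: contraNT => /(embed_Vinf_vanish im G hB) ->.
- move=> a v w [s1 /pickle_lift_covers h1] [s2 /pickle_lift_covers h2'] p.
  have -> : pickle_lift (fun j => a * v j + w j) =
            (fun n => a * pickle_lift v n + pickle_lift w n).
    apply: functional_extensionality => n; rewrite /pickle_lift.
    by case: pickle_inv; rewrite /= ?mulr0 ?addr0.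
  exact: embed_Vinf_lin h1 h2'.
- move=> w s hw s' hs'.
  by rewrite (cubic_eval_embed_Vinf him h2 h3 (pickle_lift_covers hw) hs') cubic_eval_pickle.
Qed.
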